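(* Let $F$ be a field of characteristic $0$, let $G$ be a group such that its abelianization $\widetilde G=G/[G,G]$ is finitely generated, and let $A$ be an $F$-vector space endowed with a linear right $G$-action $a\mapsto a^g$. If $\dim_F A^G<\infty$, then $\dim_F \mathcal P_n(G,A)<\infty$ for every $n\in\mathbb Z_+$.
   Context: A right $G$-action on $A$ means maps $a\mapsto a^g$ with $a^{\mathbf e}=a$ and $(a^g)^h=a^{gh}$, where $\mathbf e$ is the identity of $G$; ''linear'' means each $a\mapsto a^g$ is $F$-linear. $A^G=\{a\in A: a^g=a \ \forall g\in G\}$. For $n\ge 0$, $\mathcal C^n(G,A)$ is the space of normalized $n$-cochains: $\mathcal C^0(G,A)=A$, and for $n\ge1$ it consists of all functions $c:G^n\to A$ with $c(g_1,\dots,g_n)=0$ whenever some $g_i=\mathbf e$. For $n\ge1$ define $d_n:\mathcal C^{n-1}(G,A)\to\mathcal C^n(G,A)$ by $(d_nc)(g_1,\dots,g_n)=[c(g_1,\dots,g_{n-1})]^{g_n}-c(g_1,\dots,g_{n-1})$ (for $n=1$: $(d_1a)(g_1)=a^{g_1}-a$). The iterated difference operators are $D^0=\mathrm{id}_A$ and $D^n=d_nD^{n-1}$ for $n\ge1$. The space of $G$-polynomials (polynomial-like elements) of order at most $n$ is $\mathcal P_n(G,A)=\ker\big(D^{n+1}:A\to\mathcal C^{n+1}(G,A)\big)$. *)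

From Stdlib Require List.
From mathcomp Require Import all_boot all_algebra.
Set Implicit Arguments. Unset Strict Implicit. Unset Printing Implicit Defensive.
Import GRing.Theory.
Local Open Scope ring_scope.

Record group := Group {
  gcar :> Type;
  gmul : gcar -> gcar -> gcar;
  gone : gcar;
  ginv : gcar -> gcar;
  gmulA : forall x y z, gmul x (gmul y z) = gmul (gmul x y) z;
  gmul1g : forall x, gmul gone x = x;
  gmulg1 : forall x, gmul x gone = x;
  gmulVg : forall x, gmul (ginv x) x = gone;
  gmulgV : forall x, gmul x (ginv x) = gone }.

Inductive gen (G : group) (S : G -> Prop) : G -> Prop :=
| gen_in x : S x -> gen S x
| gen_one : gen S (gone G)
| gen_mul x y : gen S x -> gen S y -> gen S (gmul x y)
| gen_inv x : gen S x -> gen S (ginv x).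

Definition commg (G : group) (x y : G) : G :=
  gmul (gmul (ginv x) (ginv y)) (gmul x y).

Definition commutator_subgroup (G : group) : G -> Prop :=
  gen (fun z => exists x y, z = commg x y).

(* G/[G,G] is finitely generated: there is a finite list s whose images
   generate G/[G,G], i.e. G is generated by s together with [G,G]. *)
Definition abelianization_fg (G : group) : Prop :=
  exists s : seq G,
    forall g : G, gen (fun x => List.In x s \/ commutator_subgroup x) g.

Definition is_linear_right_action (F : fieldType) (A : lmodType F) (G : group)
  (act : A -> G -> A) : Prop :=
  (forall a, act a (gone G) = a) /\
  (forall a g h, act (act a g) h = act a (gmul g h)) /\
  (forall g (k : F) a b, act (k *: a + b) g = k *: act a g + act b g).

Definition fixed_space (F : fieldType) (A : lmodType F) (G : group)
  (act : A -> G -> A) : A -> Prop := fun a => forall g, act a g = a.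

(* iterated difference operator D^n : A -> C^n(G,A); an n-cochain is
   represented as a function on sequences, evaluated at [:: g_1; ...; g_n]:
   (D^{m+1} a)(g_1..g_{m+1}) = (D^m a (g_1..g_m))^{g_{m+1}} - D^m a (g_1..g_m) *)
Fixpoint Diter (F : fieldType) (A : lmodType F) (G : group)
  (act : A -> G -> A) (n : nat) (a : A) : seq G -> A :=
  match n with
  | 0 => fun _ => a
  | m.+1 => fun gs =>
      act (Diter act m a (take m gs)) (nth (gone G) gs m)
      - Diter act m a (take m gs)
  end.

Definition Ppoly (F : fieldType) (A : lmodType F) (G : group)
  (act : A -> G -> A) (n : nat) : A -> Prop :=
  fun a => forall gs : seq G, size gs = n.+1 -> Diter act n.+1 a gs = 0.

Definition in_span (F : fieldType) (A : lmodType F) (s : seq A) (a : A) : Prop :=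
  exists c : 'I_(size s) -> F, a = \sum_(i < size s) c i *: s`_i.

Definition finite_dim (F : fieldType) (A : lmodType F) (S : A -> Prop) : Prop :=
  exists s : seq A, (forall x, List.In x s -> S x) /\
    (forall a, S a <-> in_span s a).

From Pilot Require Import Defs.
From HB Require Import structures.
From mathcomp Require Import all_boot all_algebra.
From Stdlib Require Import Classical.
From Stdlib Require List.
Set Implicit Arguments. Unset Strict Implicit. Unset Printing Implicit Defensive.
Import GRing.Theory.
Local Open Scope ring_scope.

(* Write K_n = ker D^n, so that P_n = K_(n+1), K_1 = A^G, and a lies in
   K_(n+1) iff a^g - a lies in K_n for every g.  For a in K_(n+2) the identity
   (a^(gh) - a) - (a^g - a) - (a^h - a) = D^2 a (g, h) makes g |-> a^g - a a
   homomorphism from G to K_(n+1)/K_n; it therefore factors through the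
   abelianization and is determined by its values on finitely many generators
   s_1, ..., s_k of G modulo [G,G].  Hence a |-> (a^(s_i) - a)_i maps K_(n+2)
   to K_(n+1)^k with kernel inside K_(n+1), and finite dimensionality
   propagates by induction from K_1 = A^G. *)

Lemma exists_map_preimage (T U : Type) (P : T -> Prop) (f : T -> U) (t : seq U) :
  (forall y, List.In y t -> exists2 x, P x & y = f x) ->
  exists2 xs, (forall x, List.In x xs -> P x) & t = map f xs.
Proof.
elim: t => [|y t IH] ht; first by exists [::].
have [x Px ->] := ht y (or_introl erefl).
have [xs Pxs ->] := IH (fun z tz => ht z (or_intror tz)).
by exists (x :: xs) => // z /= [<- | /Pxs].
Qed.

Section Span.
Variables (F : fieldType) (A : lmodType F).

Definition subspace (S : A -> Prop) :=
  S 0 /\ forall k a b, S a -> S b -> S (k *: a + b).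

Section SubspaceTheory.
Variables (S : A -> Prop) (subS : subspace S).

Lemma subspace0 : S 0. Proof. exact: subS.1. Qed.

Lemma subspaceD a b : S a -> S b -> S (a + b).
Proof. by move=> Sa Sb; have := subS.2 1 a b Sa Sb; rewrite scale1r. Qed.

Lemma subspaceZ k a : S a -> S (k *: a).
Proof. by move=> Sa; have := subS.2 k a 0 Sa subspace0; rewrite addr0. Qed.

Lemma subspaceN a : S a -> S (- a).
Proof. by rewrite -scaleN1r; apply: subspaceZ. Qed.

Lemma subspaceB a b : S a -> S b -> S (a - b).
Proof. by move=> Sa /subspaceN; apply: subspaceD. Qed.

End SubspaceTheory.

Lemma subspaceI (S T : A -> Prop) :
  subspace S -> subspace T -> subspace (fun a => S a /\ T a).
Proof.
move=> [S0 SL] [T0 TL]; split=> // k a b [Sa Ta] [Sb Tb].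
by split; [exact: SL | exact: TL].
Qed.

Lemma in_span_nil (a : A) : in_span [::] a <-> a = 0.
Proof.
split=> [[c ->] | ->]; first by rewrite big_ord0.
by exists (fun=> 0); rewrite big_ord0.
Qed.

Lemma in_span_cons (x : A) s a :
  in_span (x :: s) a <-> exists k r, in_span s r /\ a = k *: x + r.
Proof.
split=> [[c ->] | [k [_ [[c ->] ->]]]].
  exists (c ord0), (\sum_(i < size s) c (lift ord0 i) *: s`_i).
  by split; [exists (fun i => c (lift ord0 i)) | rewrite big_ord_recl].
exists (fun i : 'I_(size s).+1 => if unlift ord0 i is Some j then c j else k).
by rewrite big_ord_recl unlift_none; congr (_ + _); apply: eq_bigr => i _; rewrite liftK.
Qed.

Lemma subspace_in_span (s : seq A) : subspace (in_span s).
Proof.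
split; first by exists (fun=> 0); rewrite big1 // => i _; rewrite scale0r.
move=> k _ _ [c ->] [d ->]; exists (fun i => k * c i + d i).
by rewrite scaler_sumr -big_split; apply: eq_bigr => i _; rewrite scalerDl scalerA.
Qed.

Lemma in_span_subset (S : A -> Prop) s a :
  subspace S -> (forall x, List.In x s -> S x) -> in_span s a -> S a.
Proof.
move=> subS; elim: s a => [|x s IH] a sS; first by move/in_span_nil ->; exact: subspace0.
case/in_span_cons=> k [r [sr ->]]; apply: subS.2; first by apply: sS; left.
by apply: IH sr => y sy; apply: sS; right.
Qed.

Lemma in_span_cat (s t : seq A) a b :
  in_span s a -> in_span t b -> in_span (s ++ t) (a + b).
Proof.
elim: s a => [|x s IH] a; first by move/in_span_nil ->; rewrite add0r.
case/in_span_cons=> k [r [sr ->]] tb; apply/in_span_cons.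
by exists k, (r + b); split; [exact: IH | rewrite addrA].
Qed.

Lemma finite_dim_ext (S T : A -> Prop) :
  (forall a, S a <-> T a) -> finite_dim S -> finite_dim T.
Proof.
move=> ST [s [sS Sspan]]; exists s; split=> [x /sS /ST // | a].
by split=> [/ST /Sspan | /Sspan /ST].
Qed.

Lemma finite_dim_intro (S : A -> Prop) s :
  subspace S -> (forall x, List.In x s -> S x) -> (forall a, S a -> in_span s a) ->
  finite_dim S.
Proof.
move=> subS sS Sspan; exists s; split=> // a.
by split=> [/Sspan // | ]; apply: in_span_subset.
Qed.

Lemma finite_dim_sub_span (w : seq A) S :
  subspace S -> (forall a, S a -> in_span w a) -> finite_dim S.
Proof.
elim: w S => [|x w IH] S subS Sw; first exact: (finite_dim_intro (s := [::])).
have [s' [s'S Sw_span]] := IH _ (subspaceI subS (subspace_in_span w)) (fun a h => h.2).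
have [[b [Sb wb]] | Sw'] := classic (exists b, S b /\ ~ in_span w b).
- (* b has a nonzero x-coordinate, so it can take the place of x *)
  have /in_span_cons [c [r [wr eb]]] := Sw b Sb.
  have c0 : c != 0 by apply/eqP => c0; apply: wb; rewrite eb c0 scale0r add0r.
  apply: (finite_dim_intro (s := b :: s')) => // [y /= [<- | /s'S []] // | a Sa].
  have /in_span_cons [d [r' [wr' ea]]] := Sw a Sa.
  apply/in_span_cons; exists (d / c), (a - (d / c) *: b).
  split; last by rewrite addrC subrK.
  apply/Sw_span; split; first exact: subspaceB (subspaceZ subS _ Sb).
  have -> : a - (d / c) *: b = (- (d / c)) *: r + r'.
    by rewrite ea eb scalerDr scalerA divfK // opprD addrACA subrr add0r scaleNr addrC.
  exact: (subspace_in_span w).2.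
- apply: (finite_dim_intro (s := s')) => // [y /s'S [] // | a Sa].
  by apply/Sw_span; split=> //; apply: NNPP => wa; apply: Sw'; exists a.
Qed.

End Span.

Section Kernels.
Variables (F : fieldType) (A B : lmodType F).

Lemma subspace_ker (f : {linear A -> B}) : subspace (fun a => f a = 0).
Proof. by split=> [|k a b fa fb]; rewrite ?linear0 // linearP fa fb scaler0 addr0. Qed.

Lemma in_span_map (f : {linear A -> B}) s y :
  in_span (map f s) y -> exists2 v, in_span s v & y = f v.
Proof.
elim: s y => [|x s IH] y /=.
  by move/in_span_nil ->; exists 0; [exact/in_span_nil | rewrite linear0].
case/in_span_cons=> k [r [/IH [v sv ->] ->]].
by exists (k *: x + v); [apply/in_span_cons; exists k, v | rewrite linearP].
Qed.

Lemma finite_dim_of_ker (f : {linear A -> B}) w u V :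
  subspace V -> (forall a, V a -> in_span w (f a)) ->
  (forall a, V a -> f a = 0 -> in_span u a) -> finite_dim V.
Proof.
move=> subV Vw Ku.
have [u' [u'K Kspan]] := finite_dim_sub_span (subspaceI subV (subspace_ker f))
  (fun a '(conj Va fa0) => Ku a Va fa0).
have subfV : subspace (fun y => exists2 a, V a & y = f a).
  split; first by exists 0; [exact: subspace0 | rewrite linear0].
  move=> k _ _ [a Va ->] [b Vb ->]; exists (k *: a + b); first exact: subV.2.
  by rewrite linearP.
have [t [tfV fVspan]] : finite_dim (fun y => exists2 a, V a & y = f a).
  by apply: finite_dim_sub_span subfV _ => _ [a Va ->]; apply: Vw.
have [vs vsV tE] := exists_map_preimage tfV; rewrite {}tE in fVspan.
apply: (finite_dim_intro (s := vs ++ u')) => //.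
  by move=> x /List.in_app_iff [/vsV | /u'K []].
move=> a Va.
have [v vsv fav] := in_span_map (proj1 (fVspan _) (ex_intro2 _ _ a Va erefl)).
have Vv := in_span_subset subV vsV vsv.
have -> : a = v + (a - v) by rewrite addrC subrK.
apply: in_span_cat vsv _; apply/Kspan.
by split; [exact: subspaceB | rewrite linearB fav subrr].
Qed.

Lemma finite_dim_of_kers (fs : seq {linear A -> B}) w u V :
  subspace V -> (forall f a, List.In f fs -> V a -> in_span w (f a)) ->
  (forall a, V a -> (forall f, List.In f fs -> f a = 0) -> in_span u a) ->
  finite_dim V.
Proof.
elim: fs V => [|f fs IH] V subV Vw Ku.
  by apply: finite_dim_sub_span subV _ => a Va; apply: Ku.
have [u' [_ Kspan]] : finite_dim (fun a => V a /\ f a = 0).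
  apply: IH (subspaceI subV (subspace_ker f)) _ _ => [g a fsg [Va _] | a [Va fa0] fs0].
    by apply: Vw => //; right.
  by apply: Ku => // g /= [<- | /fs0].
apply: (finite_dim_of_ker (f := f) subV) => [a | a Va fa0]; first exact: Vw (or_introl erefl).
exact/Kspan.
Qed.

End Kernels.

Section HomomorphismModSubspace.
Variables (F : fieldType) (A : lmodType F) (G : group) (S : A -> Prop) (phi : G -> A).
Hypotheses (subS : subspace S) (phiM : forall g h, S (phi (gmul g h) - (phi g + phi h))).

Lemma hom_mod1 : S (phi (gone G)).
Proof.
have := subspaceN subS (phiM (gone G) (gone G)).
by rewrite gmul1g opprB addrK.
Qed.

Lemma hom_mod_inv g h : gmul g h = gone G -> S (phi g + phi h).
Proof.
move=> gh1; have := subspaceB subS hom_mod1 (phiM g h).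
by rewrite gh1 opprB addrC subrK.
Qed.

Lemma hom_mod_commg x y : S (phi (Defs.commg x y)).
Proof.
have yx_inv : gmul (gmul y x) (gmul (ginv x) (ginv y)) = gone G.
  by rewrite -gmulA (gmulA x) gmulgV gmul1g gmulgV.
have phiMyx : S (phi x + phi y - phi (gmul y x)).
  by have := subspaceN subS (phiM y x); rewrite opprB [phi y + _]addrC.
(* Modulo S, phi [x, y] = phi (x^-1 y^-1) + phi (x y), phi (x y) = phi x + phi y
   = phi (y x), and phi (y x) + phi (x^-1 y^-1) = phi 1 = 0. *)
have telescope (p u v w t : A) : p = (p - (u + v)) + (v - t) + (t - w) + (w + u).
  by rewrite !addrA !subrK opprD addrA !subrK.
rewrite (telescope (phi (Defs.commg x y)) (phi (gmul (ginv x) (ginv y)))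
  (phi (gmul x y)) (phi (gmul y x)) (phi x + phi y)).
apply: (subspaceD subS); last exact: hom_mod_inv yx_inv.
apply: (subspaceD subS) phiMyx; exact: (subspaceD subS) (phiM _ _) (phiM x y).
Qed.

Lemma hom_mod_gen (X : G -> Prop) :
  (forall x, X x -> S (phi x)) -> forall g, gen X g -> S (phi g).
Proof.
move=> SX g; elim=> {g} [x /SX // | | g h _ Sg _ Sh | g _ Sg].
- exact: hom_mod1.
- by have := subspaceD subS (phiM g h) (subspaceD subS Sg Sh); rewrite subrK.
- by have := subspaceB subS (hom_mod_inv (gmulgV g)) Sg; rewrite addrC addKr.
Qed.

Lemma hom_mod_generators (s : seq G) :
  (forall g, gen (fun x => List.In x s \/ commutator_subgroup x) g) ->
  (forall x, List.In x s -> S (phi x)) -> forall g, S (phi g).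
Proof.
move=> sgen Ss g; apply: hom_mod_gen (sgen g) => x [/Ss // | ].
by apply: hom_mod_gen => _ [y [z ->]]; apply: hom_mod_commg.
Qed.

End HomomorphismModSubspace.

Section Differences.
Variables (F : fieldType) (A : lmodType F) (G : group) (act : A -> G -> A).

Definition delta (g : G) (a : A) : A := act a g - a.

Fixpoint kerD (n : nat) (a : A) : Prop :=
  if n is m.+1 then forall g, kerD m (delta g a) else a = 0.

Lemma Diter_cons n a g gs : Diter act n.+1 a (g :: gs) = Diter act n (delta g a) gs.
Proof.
elim: n gs => [|n IH] gs //.
have -> : Diter act n.+2 a (g :: gs) =
  act (Diter act n.+1 a (g :: take n gs)) (nth (gone G) gs n)
  - Diter act n.+1 a (g :: take n gs) by [].
by rewrite IH.
Qed.

Lemma Diter_eq0_kerD n a :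
  (forall gs, size gs = n -> Diter act n a gs = 0) <-> kerD n a.
Proof.
elim: n a => [|n IH] a; first by split=> [D0 | /= -> gs _] //; exact: D0 [::] erefl.
split=> [D0 g | Ka [|g gs] // [gsn]].
  by apply: (IH _).1 => gs gsn; rewrite -Diter_cons; apply: D0; rewrite /= gsn.
by rewrite Diter_cons; apply: (IH _).2 (Ka g) _ gsn.
Qed.

Lemma Ppoly_kerD n a : Ppoly act n a <-> kerD n.+1 a.
Proof. exact: Diter_eq0_kerD. Qed.

Hypothesis hact : is_linear_right_action act.

Lemma act_is_linear g : linear (act^~ g).
Proof. exact: hact.2.2. Qed.

Lemma delta_is_linear g : linear (delta g).
Proof. by move=> k a b; rewrite /delta act_is_linear scalerBr opprD addrACA. Qed.

HB.instance Definition _ g :=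
  GRing.isLinear.Build F A A *:%R (delta g) (delta_is_linear g).

Lemma delta_mul g h a :
  delta (gmul g h) a = delta h (delta g a) + (delta g a + delta h a).
Proof.
rewrite /delta -hact.2.1 (zmod_morphism_linear (act_is_linear h)).
by rewrite addrA subrK addrA subrK.
Qed.

Lemma subspace_kerD n : subspace (kerD n).
Proof.
elim: n => [|n [K0 KL]] /=; first by split=> // k a b -> ->; rewrite scaler0 addr0.
split=> [g | k a b Ka Kb g]; first by rewrite linear0.
by rewrite linearP; apply: KL; [apply: Ka | apply: Kb].
Qed.

Lemma kerD1_fixed a : kerD 1 a <-> fixed_space act a.
Proof. by split=> Ka g; [apply: subr0_eq; exact: Ka | rewrite /= /delta Ka subrr]. Qed.

Lemma kerD_of_generators (s : seq G) n a :
  (forall g, gen (fun x => List.In x s \/ commutator_subgroup x) g) ->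
  kerD n.+2 a -> (forall x, List.In x s -> delta x a = 0) -> kerD n.+1 a.
Proof.
move=> sgen Ka s0; apply: (hom_mod_generators (phi := delta^~ a) (subspace_kerD n) _ sgen).
  by move=> g h; rewrite delta_mul addrK; apply: Ka.
by move=> x /s0 ->; apply: subspace0 (subspace_kerD n).
Qed.

Lemma finite_dim_kerD : abelianization_fg G -> finite_dim (fixed_space act) ->
  forall n, finite_dim (kerD n.+1).
Proof.
move=> [s sgen] fixed_fd; elim=> [|n [w [_ wspan]]].
  by apply: finite_dim_ext fixed_fd => a; apply: iff_sym; apply: kerD1_fixed.
pose deltas := map (fun g => delta g : {linear A -> A}) s.
apply: (finite_dim_of_kers (fs := deltas) (w := w) (u := w)).
- exact: subspace_kerD.
- by move=> _ a /List.in_map_iff [g [<- _]] Ka; apply/wspan; apply: Ka.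
- move=> a Ka s0; apply/wspan; apply: kerD_of_generators sgen Ka _ => x sx.
  exact: s0 _ (List.in_map _ _ _ sx).
Qed.

End Differences.

Theorem mainTheorem1 (F : fieldType) (A : lmodType F) (G : group)
  (act : A -> G -> A) :
  [pchar F] =i pred0 ->
  abelianization_fg G ->
  is_linear_right_action act ->
  finite_dim (fixed_space act) ->
  forall n : nat, finite_dim (Ppoly act n).
Proof.
move=> _ fg hact fixed_fd n.
apply: finite_dim_ext (finite_dim_kerD hact fg fixed_fd n) => a.
exact: iff_sym (Ppoly_kerD act n a).
Qed.
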